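(* Let $N=(V,E,c)$ be a network with $c_{\min}=\inf_{x\in V}c(x)>0$, fix $o\in V$ and $\gamma\in\mathbb{R}$, and let $K(x)=c(x)\min\{1,\langle x\rangle^{-2}(\log\langle x\rangle)^\gamma\}$. Let $X=(X_n)_{n\geq0}$ be the random walk on $N$ started at $x\in V$, and let $\tau_\dagger$ be the killing time of the coupled walk on $(V,E,c,K)$, so that conditionally on $X$, $\mathbf{P}_x(\tau_\dagger>n\mid X)=\prod_{i=0}^{n-1}\Big(1-\frac{K(X_i)}{c(X_i)+K(X_i)}\Big)$. Let $r>0$ and let $\mathscr{S}_r$ be the event that $\liminf_{n\to\infty}\frac{d(o,X_n)}{n^{1/2}(\log n)^r}>0$. If $\gamma+1<2r$, then $\mathbf{P}_x(\tau_\dagger=\infty\mid X)>0$ almost surely on the event $\mathscr{S}_r$.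
   Context: A network $(V,E,c)$ has conductances $c:E\to(0,\infty)$; $c(u)$ is the total conductance of oriented edges emanating from $u$, $c(u,v)$ that of oriented edges from $u$ to $v$, and the random walk on $N$ has transitions $c(u,v)/c(u)$. $d$ is the graph distance and $\langle x\rangle=2\vee d(o,x)$. The random walk on the network with killing $(V,E,c,K)$ has $P(u,v)=c(u,v)/(c(u)+K(u))$ and $P(u,\dagger)=K(u)/(c(u)+K(u))$; it is coupled with $X$ so that the two coincide until the killing time $\tau_\dagger$ (the first time the killed walk is at $\dagger$), with killing at each step from $X_i$ occurring independently given $X$ with probability $K(X_i)/(c(X_i)+K(X_i))$. *)

From Stdlib Require Import Reals ClassicalEpsilon.
From Coquelicot Require Import Coquelicot.
Open Scope R_scope.

Section Net.
Context {V : Type}.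

(* [cuv u v] = c(u,v), total conductance of oriented edges from u to v.
   u and v are adjacent in the underlying graph iff c(u,v) > 0. *)

Inductive walk_len (cuv : V -> V -> R) : nat -> V -> V -> Prop :=
| walk0 : forall u, walk_len cuv 0 u u
| walkS : forall n u w v, 0 < cuv u w -> walk_len cuv n w v ->
            walk_len cuv (S n) u v.

Definition connected (cuv : V -> V -> R) : Prop :=
  forall u v, exists n, walk_len cuv n u v.

(* graph distance: the least length of a path from u to v
   (well defined when the graph is connected). *)
Definition dist (cuv : V -> V -> R) (u v : V) : nat :=
  epsilon (inhabits 0%nat)
    (fun n => walk_len cuv n u v /\ forall m, walk_len cuv m u v -> (n <= m)%nat).

Definition bracket (cuv : V -> V -> R) (o x : V) : R :=
  Rmax 2 (INR (dist cuv o x)).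

Definition Kill (cuv : V -> V -> R) (c : V -> R) (o : V) (gamma : R) (x : V) : R :=
  c x * Rmin 1 (/ (bracket cuv o x ^ 2) * Rpower (ln (bracket cuv o x)) gamma).

Definition kill_prob cuv c o gamma (x : V) : R :=
  Kill cuv c o gamma x / (c x + Kill cuv c o gamma x).

Fixpoint surv_prod cuv c o gamma (X : nat -> V) (n : nat) : R :=
  match n with
  | O => 1
  | S k => surv_prod cuv c o gamma X k * (1 - kill_prob cuv c o gamma (X k))
  end.

Definition surv_inf cuv c o gamma (X : nat -> V) : Rbar :=
  Lim_seq (surv_prod cuv c o gamma X).

Definition S_event (cuv : V -> V -> R) (o : V) (r : R) (X : nat -> V) : Prop :=
  Rbar_lt (Finite 0)
    (LimInf_seq (fun n => INR (dist cuv o (X n)) /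
                          (sqrt (INR n) * Rpower (ln (INR n)) r))).

(* X is a possible trajectory of the random walk on the network started at x *)
Definition trajectory (cuv : V -> V -> R) (x : V) (X : nat -> V) : Prop :=
  X 0%nat = x /\ forall n, 0 < cuv (X n) (X (S n)).

End Net.

(* On the event S_r, eventually d(o,X_n) >= eps sqrt n (log n)^r, while
   d(o,X_n) <= d(o,x) + n.  Hence log <X_n> is comparable to log n, and the
   killing probability at step n is at most C / (n (log n)^q) with
   q = 2r - gamma > 1.  This bound telescopes against
   (log (n-1))^(1-q) - (log n)^(1-q), so the killing probabilities are
   summable and the survival product stays bounded away from 0. *)

From Pilot Require Import Defs.
From Stdlib Require Import Reals Lra Lia Classical ClassicalEpsilon Wf_nat.
From Coquelicot Require Import Coquelicot.
Open Scope R_scope.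

Lemma exp_le_compat x y : x <= y -> exp x <= exp y.
Proof. intros [Hlt | ->]; [left; apply exp_increasing, Hlt | right; reflexivity]. Qed.

Lemma Rpower_gt0 x y : 0 < Rpower x y.
Proof. apply exp_pos. Qed.

Lemma ln_le_sub1 y : 0 < y -> ln y <= y - 1.
Proof. intros Hy. pose proof (exp_ineq1_le (ln y)) as H. rewrite exp_ln in H; lra. Qed.

Lemma ln_sub_ge a b : 0 < a -> 0 < b -> (b - a) / b <= ln b - ln a.
Proof.
  intros Ha Hb. pose proof (ln_le_sub1 (a / b) ltac:(apply Rdiv_lt_0_compat; lra)) as H.
  rewrite ln_div in H by lra.
  replace ((b - a) / b) with (1 - a / b) by (field; lra). lra.
Qed.

Lemma ln_ge1 t : 3 <= t -> 1 <= ln t.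
Proof.
  intros Ht. rewrite <- (ln_exp 1). apply ln_le; [apply exp_pos|].
  pose proof exp_le_3. lra.
Qed.

Lemma Rpower_le_of_ratio a b k g : 0 < a -> 1 <= k -> a / k <= b <= k * a ->
  Rpower b g <= Rpower k (Rabs g) * Rpower a g.
Proof.
  intros Ha Hk [Hlo Hhi].
  assert (Hak : 0 < a / k) by (apply Rdiv_lt_0_compat; lra).
  assert (Hlog : Rabs (ln b - ln a) <= ln k).
  { pose proof (ln_le _ _ Hak Hlo) as H1. pose proof (ln_le b _ ltac:(lra) Hhi) as H2.
    rewrite ln_div in H1 by lra. rewrite ln_mult in H2 by lra.
    apply Rabs_le. lra. }
  assert (Hg : g * (ln b - ln a) <= Rabs g * ln k).
  { eapply Rle_trans; [apply Rle_abs|]. rewrite Rabs_mult.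
    apply Rmult_le_compat_l; [apply Rabs_pos | exact Hlog]. }
  unfold Rpower. rewrite <- exp_plus. apply exp_le_compat. lra.
Qed.

Lemma Rpower_sub_ge_tangent s a b : s <= 0 -> 0 < a -> 0 < b ->
  - s * ((b - a) / b) * Rpower b s <= Rpower a s - Rpower b s.
Proof.
  intros Hs Ha Hb.
  assert (Hsplit : Rpower a s = Rpower b s * exp (s * (ln a - ln b))).
  { unfold Rpower. rewrite <- exp_plus. f_equal. ring. }
  pose proof (exp_ineq1_le (s * (ln a - ln b))) as Hexp.
  pose proof (ln_sub_ge a b Ha Hb) as Hln.
  pose proof (Rpower_gt0 b s).
  assert (- s * ((b - a) / b) <= s * (ln a - ln b)) by nra.
  rewrite Hsplit. nra.
Qed.

Lemma Rpower_ln_telescope C q t : 0 <= C -> 1 < q -> 3 <= t ->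
  C / (t * Rpower (ln t) q) <=
  C / (q - 1) * (Rpower (ln (t - 1)) (1 - q) - Rpower (ln t) (1 - q)).
Proof.
  intros HC Hq Ht.
  assert (HL1 : 0 < ln (t - 1)) by (rewrite <- ln_1; apply ln_increasing; lra).
  assert (HL : 0 < ln t) by (pose proof (ln_ge1 t Ht); lra).
  assert (Hstep : / t <= ln t - ln (t - 1)).
  { replace (/ t) with ((t - (t - 1)) / t) by (field; lra). apply ln_sub_ge; lra. }
  assert (Hpow : Rpower (ln t) (1 - q) = ln t / Rpower (ln t) q).
  { unfold Rminus. rewrite Rpower_plus, Rpower_1, Rpower_Ropp by lra. reflexivity. }
  pose proof (Rpower_gt0 (ln t) q).
  replace (C / (t * Rpower (ln t) q))
    with (C / (q - 1) * ((q - 1) * / t * / Rpower (ln t) q)) by (field; lra).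
  apply Rmult_le_compat_l; [apply Rdiv_le_0_compat; lra|].
  eapply Rle_trans; [| apply Rpower_sub_ge_tangent; lra].
  rewrite Hpow. replace (- (1 - q)) with (q - 1) by ring.
  replace ((q - 1) * ((ln t - ln (t - 1)) / ln t) * (ln t / Rpower (ln t) q))
    with ((q - 1) * (ln t - ln (t - 1)) * / Rpower (ln t) q) by (field; lra).
  apply Rmult_le_compat_r; [apply Rlt_le, Rinv_0_lt_compat; lra|].
  apply Rmult_le_compat_l; lra.
Qed.

Lemma is_lim_seq_Rpower_ln_neg s : s < 0 ->
  is_lim_seq (fun n => Rpower (ln (INR n - 1)) s) 0.
Proof.
  intros Hs. apply is_lim_seq_incr_1.
  apply is_lim_seq_ext with (fun n => exp (s * ln (ln (INR n)))).
  { intros n. rewrite S_INR. unfold Rpower. now replace (INR n + 1 - 1) with (INR n) by ring. }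
  assert (Hlnln : is_lim_seq (fun n => ln (ln (INR n))) p_infty).
  { eapply filterlim_comp; [eapply filterlim_comp; [apply is_lim_seq_INR|]|];
      apply is_lim_ln_p. }
  pose proof (is_lim_seq_scal_l _ s _ Hlnln) as Hm.
  assert (Hmult : Rbar_mult s p_infty = m_infty).
  { simpl. destruct (Rle_dec 0 s); [exfalso; lra | reflexivity]. }
  rewrite Hmult in Hm.
  eapply filterlim_comp; [exact Hm | apply is_lim_exp_m].
Qed.

Lemma ln_sqrt_eq t : 0 < t -> ln (sqrt t) = ln t / 2.
Proof. intros Ht. rewrite <- Rpower_sqrt, ln_Rpower by exact Ht. field. Qed.

Lemma inv_sq_Rpower_ln_le eps g r t b : 0 < eps -> 0 < r -> 3 <= t ->
  - 4 * ln eps <= ln t -> eps * (sqrt t * Rpower (ln t) r) <= b -> b <= t * t ->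
  / b ^ 2 * Rpower (ln b) g <=
  Rpower 4 (Rabs g) / (eps * eps) / (t * Rpower (ln t) (2 * r - g)).
Proof.
  intros Heps Hr Ht Heps_t Hlo Hhi.
  set (L := ln t) in *.
  set (m := eps * (sqrt t * Rpower L r)) in *.
  assert (HL : 1 <= L) by (apply ln_ge1; lra).
  assert (Hsqrt : 0 < sqrt t) by (apply sqrt_lt_R0; lra).
  assert (Hm : 0 < m) by (unfold m; pose proof (Rpower_gt0 L r);
                          repeat apply Rmult_lt_0_compat; lra).
  assert (Hlnm : L / 4 <= ln m).
  { unfold m. rewrite !ln_mult, ln_sqrt_eq, ln_Rpower
      by (try apply Rmult_lt_0_compat; try apply Rpower_gt0; lra).
    fold L.
    assert (0 <= ln L) by (rewrite <- ln_1; apply ln_le; lra).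
    assert (0 <= r * ln L) by (apply Rmult_le_pos; lra).
    lra. }
  assert (Hlnb : L / 4 <= ln b <= 4 * L).
  { pose proof (ln_le _ _ Hm Hlo). pose proof (ln_le b _ ltac:(lra) Hhi).
    rewrite ln_mult in * by lra. unfold L in *. lra. }
  assert (Hpow : Rpower (ln b) g <= Rpower 4 (Rabs g) * Rpower L g)
    by (apply Rpower_le_of_ratio; lra).
  assert (Hinv : / b ^ 2 <= / (m * m))
    by (apply Rinv_le_contravar; [nra | simpl; nra]).
  assert (Hm2 : m * m = eps * eps * t * (Rpower L (2 * r - g) * Rpower L g)).
  { unfold m. rewrite <- Rpower_plus. replace (2 * r - g + g) with (r + r) by ring.
    rewrite Rpower_plus. rewrite <- (sqrt_sqrt t) at 3 by lra. ring. }
  pose proof (Rpower_gt0 L g). pose proof (Rpower_gt0 L (2 * r - g)).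
  pose proof (Rpower_gt0 4 (Rabs g)).
  eapply Rle_trans.
  { apply Rmult_le_compat; [apply Rlt_le, Rinv_0_lt_compat; simpl; nra
                           | apply Rlt_le, Rpower_gt0 | exact Hinv | exact Hpow]. }
  rewrite Hm2. right. field. repeat split; lra.
Qed.

Section OneMinusProduct.

Variables (u p : nat -> R).
Hypothesis u_succ : forall n, u (S n) = u n * (1 - p n).
Hypothesis p_range : forall n, 0 <= p n < 1.
Hypothesis u0_pos : 0 < u 0.

Lemma prod_pos n : 0 < u n.
Proof.
  induction n as [|n IH]; [exact u0_pos|].
  rewrite u_succ. specialize (p_range n). nra.
Qed.

Lemma prod_le_add n k : u (n + k)%nat <= u n.
Proof.
  induction k as [|k IH]; [rewrite Nat.add_0_r; lra|].
  rewrite Nat.add_succ_r, u_succ.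
  pose proof (prod_pos (n + k)). specialize (p_range (n + k)%nat). nra.
Qed.

(* Weierstrass' inequality prod (1 - p_i) >= 1 - sum p_i, with the sum telescoped. *)
Lemma prod_ge_telescope (h : nat -> R) B N :
  (forall n, (N <= n)%nat -> p n <= B * (h n - h (S n))) ->
  forall k, u N * (1 - B * (h N - h (N + k)%nat)) <= u (N + k)%nat.
Proof.
  intros Hp k. induction k as [|k IH]; [rewrite Nat.add_0_r; lra|].
  rewrite Nat.add_succ_r, u_succ.
  pose proof (prod_le_add N k). pose proof (prod_pos N).
  specialize (Hp (N + k)%nat ltac:(lia)). specialize (p_range (N + k)%nat).
  assert (u (N + k)%nat * p (N + k)%nat <= u N * p (N + k)%nat) by nra.
  nra.
Qed.

Lemma Lim_seq_prod_pos (h : nat -> R) B : is_lim_seq h 0 ->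
  eventually (fun n => p n <= B * (h n - h (S n))) -> Rbar_lt 0 (Lim_seq u).
Proof.
  intros Hh Hp.
  assert (HBh : eventually (fun n => Rabs (B * h n) < 1 / 4)).
  { pose proof (proj2 (is_lim_seq_spec _ _) (is_lim_seq_scal_l _ B _ Hh)) as Hlim.
    simpl in Hlim. rewrite Rmult_0_r in Hlim.
    apply (filter_imp (fun n => Rabs (B * h n - 0) < 1 / 4)).
    { intros n. rewrite Rminus_0_r. trivial. }
    apply (Hlim (mkposreal (1 / 4) ltac:(lra))). }
  destruct (filter_and _ _ Hp HBh) as [N HN].
  assert (Hhalf : forall k, u N / 2 <= u (N + k)%nat).
  { intros k. pose proof (prod_ge_telescope h B N (fun n Hn => proj1 (HN n Hn)) k).
    pose proof (Rabs_def2 _ _ (proj2 (HN N (le_n N)))).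
    pose proof (Rabs_def2 _ _ (proj2 (HN (N + k)%nat ltac:(lia)))).
    pose proof (prod_pos N). nra. }
  apply Rbar_lt_le_trans with (u N / 2); [simpl; pose proof (prod_pos N); lra|].
  rewrite <- (Lim_seq_const (u N / 2)).
  apply Lim_seq_le_loc. exists N. intros n Hn.
  replace n with (N + (n - N))%nat by lia. apply Hhalf.
Qed.

End OneMinusProduct.

Lemma LimInf_seq_gt0_eventually (v : nat -> R) : Rbar_lt 0 (LimInf_seq v) ->
  exists eps, 0 < eps /\ eventually (fun n => eps < v n).
Proof.
  destruct (ex_LimInf_seq v) as [l Hl]. rewrite (is_LimInf_seq_unique _ _ Hl).
  destruct l as [l| |]; simpl; intros Hpos; [| | contradiction].
  - destruct (Hl (mkposreal (l / 2) ltac:(lra))) as [_ [N HN]].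
    exists (l / 2). split; [lra|]. exists N. intros n Hn.
    specialize (HN n Hn). simpl in HN. lra.
  - exists 1. split; [lra | apply Hl].
Qed.

Lemma eventually_INR_ge A : eventually (fun n => A <= INR n).
Proof. apply (is_lim_seq_INR (fun y => A <= y)). exists A. intros y Hy. lra. Qed.

Section Network.

Variables (V : Type) (cuv : V -> V -> R).

Lemma dist_spec u v : connected cuv ->
  walk_len cuv (Defs.dist cuv u v) u v /\
  forall m, walk_len cuv m u v -> (Defs.dist cuv u v <= m)%nat.
Proof.
  intros Hconn. unfold Defs.dist. apply epsilon_spec.
  destruct (dec_inh_nat_subset_has_unique_least_element (fun n => walk_len cuv n u v)
              (fun n => classic _) (Hconn u v)) as [n [Hleast _]].
  exists n. exact Hleast.
Qed.

Lemma walk_len_snoc n u v w :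
  walk_len cuv n u v -> 0 < cuv v w -> walk_len cuv (S n) u w.
Proof.
  induction 1 as [u | n u u' v Huu' _ IH]; intros Hvw.
  - apply walkS with w; [exact Hvw | constructor].
  - apply walkS with u'; [exact Huu' | apply IH, Hvw].
Qed.

Lemma dist_trajectory_le o x X : connected cuv -> trajectory cuv x X ->
  forall n, (Defs.dist cuv o (X n) <= Defs.dist cuv o x + n)%nat.
Proof.
  intros Hconn [HX0 HXS] n. apply (dist_spec o (X n) Hconn).
  induction n as [|n IH].
  - rewrite Nat.add_0_r, HX0. apply dist_spec, Hconn.
  - rewrite Nat.add_succ_r. apply walk_len_snoc with (X n); [exact IH | apply HXS].
Qed.

Lemma kill_prob_bounds c o g y : 0 < c y ->
  0 <= kill_prob cuv c o g y < 1 /\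
  kill_prob cuv c o g y <= / bracket cuv o y ^ 2 * Rpower (ln (bracket cuv o y)) g.
Proof.
  intros Hc. unfold kill_prob, Kill.
  set (b := bracket cuv o y).
  assert (Hb : 2 <= b) by apply Rmax_l.
  set (t := / b ^ 2 * Rpower (ln b) g).
  assert (Ht : 0 < t).
  { apply Rmult_lt_0_compat; [apply Rinv_0_lt_compat; simpl; nra | apply Rpower_gt0]. }
  set (m := Rmin 1 t).
  assert (Hm : 0 <= m <= t) by (split; [apply Rmin_glb; lra | apply Rmin_r]).
  replace (c y * m / (c y + c y * m)) with (m * / (1 + m)) by (field; nra).
  assert (Hinv : 0 < / (1 + m) <= 1).
  { split; [apply Rinv_0_lt_compat; lra|].
    rewrite <- Rinv_1. apply Rinv_le_contravar; lra. }
  replace (m * / (1 + m)) with (1 - / (1 + m)) at 2 by (field; lra).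
  split; [split|]; nra.
Qed.

Lemma kill_prob_trajectory_le c o x X g r eps :
  connected cuv -> trajectory cuv x X -> (forall y, 0 < c y) -> 0 < r -> 0 < eps ->
  eventually (fun n => eps < INR (Defs.dist cuv o (X n)) /
                             (sqrt (INR n) * Rpower (ln (INR n)) r)) ->
  eventually (fun n => kill_prob cuv c o g (X n) <=
    Rpower 4 (Rabs g) / (eps * eps) / (INR n * Rpower (ln (INR n)) (2 * r - g))).
Proof.
  intros Hconn HX Hc Hr Heps Hspread.
  set (D0 := Defs.dist cuv o x).
  (* n >= D0 + 2 gives <X_n> <= n^2, and n >= eps^-4 gives log (eps sqrt n) >= log n / 4. *)
  pose proof (filter_and _ _ (eventually_INR_ge (Rmax 3 (INR D0 + 2)))
               (eventually_INR_ge (exp (- 4 * ln eps)))) as Hlarge.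
  eapply filter_imp; [| exact (filter_and _ _ Hspread Hlarge)].
  intros n [Hratio [Hn Hexp]].
  pose proof (Rmax_l 3 (INR D0 + 2)). pose proof (Rmax_r 3 (INR D0 + 2)).
  set (t := INR n) in *.
  set (d := Defs.dist cuv o (X n)) in Hratio.
  assert (Hd : INR d <= INR D0 + t).
  { unfold t. rewrite <- plus_INR. apply le_INR, dist_trajectory_le; assumption. }
  assert (Hscale : 0 < sqrt t * Rpower (ln t) r)
    by (apply Rmult_lt_0_compat; [apply sqrt_lt_R0; lra | apply Rpower_gt0]).
  eapply Rle_trans; [apply kill_prob_bounds, Hc|].
  apply inv_sq_Rpower_ln_le; try lra.
  - rewrite <- (ln_exp (- 4 * ln eps)). apply ln_le; [apply exp_pos | lra].
  - eapply Rle_trans; [| apply Rmax_r]. fold d.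
    apply Rmult_lt_compat_r with (r := sqrt t * Rpower (ln t) r) in Hratio; [|exact Hscale].
    unfold Rdiv in Hratio. rewrite Rmult_assoc, Rinv_l in Hratio by lra. lra.
  - pose proof (pos_INR D0). apply Rmax_lub; fold d; nra.
Qed.

End Network.

Theorem lemma3p5 (V : Type) (cuv : V -> V -> R) (c : V -> R)
  (hcuv_nonneg : forall u v, 0 <= cuv u v)
  (hcuv_sym : forall u v, cuv u v = cuv v u)
  (hc_ge : forall u v, cuv u v <= c u)
  (hconn : connected cuv)
  (hcmin : exists cmin, 0 < cmin /\ forall y, cmin <= c y)
  (o : V) (gamma r : R) (hr : 0 < r) (hgr : gamma + 1 < 2 * r)
  (x : V) (X : nat -> V) (hX : trajectory cuv x X) :
  S_event cuv o r X -> Rbar_lt (Finite 0) (surv_inf cuv c o gamma X).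
Proof.
  intros HS.
  destruct hcmin as [cmin [Hcmin Hc]].
  assert (c_pos : forall y, 0 < c y) by (intros y; specialize (Hc y); lra).
  destruct (LimInf_seq_gt0_eventually _ HS) as [eps [Heps Hspread]].
  set (q := 2 * r - gamma).
  assert (Hq : 1 < q) by (unfold q; lra).
  apply (Lim_seq_prod_pos _ (fun n => kill_prob cuv c o gamma (X n)) (fun n => eq_refl))
    with (h := fun n => Rpower (ln (INR n - 1)) (1 - q))
         (B := Rpower 4 (Rabs gamma) / (eps * eps) / (q - 1)).
  - intros n. apply kill_prob_bounds, c_pos.
  - simpl; lra.
  - apply is_lim_seq_Rpower_ln_neg; lra.
  - pose proof (kill_prob_trajectory_le V cuv c o x X gamma r eps
                  hconn hX c_pos hr Heps Hspread) as Hkill.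
    eapply filter_imp; [| exact (filter_and _ _ (eventually_INR_ge 3) Hkill)].
    intros n [Hn Hp]. cbv beta.
    rewrite S_INR. replace (INR n + 1 - 1) with (INR n) by ring.
    eapply Rle_trans; [exact Hp | apply Rpower_ln_telescope; [| lra | lra]].
    apply Rdiv_le_0_compat; [apply Rlt_le, Rpower_gt0 | nra].
Qed.
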